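(* Let $N$ and $\Delta$ be integers with $\frac{N}{2} < \Delta \le N$. Then for every integer $M$ with $\binom{\Delta}{2} \le M \le f(N,\Delta)$, the pair $(N,M)$ is feasible for the family of all line graphs.
   Context: All graphs are finite and simple; $L(G)$ is the line graph of $G$; $e(\cdot)$, $\Delta(\cdot)$, $\delta(\cdot)$ denote number of edges, maximum degree and minimum degree. For integers $N \ge \Delta \ge 1$, $f(N,\Delta) = \max\{ e(L(G)) : e(G)=N, \Delta(G)=\Delta, \delta(G)\geq 1\}$. A pair $(N,M)$ is feasible (for the family of all line graphs) if there exists a graph $G$ such that $L(G)$ has exactly $N$ vertices and exactly $M$ edges. *)

From mathcomp Require Import all_boot.
Set Implicit Arguments. Unset Strict Implicit. Unset Printing Implicit Defensive.

Record sgraph := SGraph {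
  vtx : finType;
  adj : rel vtx;
  adj_sym : symmetric adj;
  adj_irr : irreflexive adj }.

Definition edges (G : sgraph) : {set {set vtx G}} :=
  [set e | [exists x, exists y, adj x y && (e == [set x; y])]].

Definition nedges (G : sgraph) : nat := #|edges G|.

Definition deg (G : sgraph) (v : vtx G) : nat := #|[set e in edges G | v \in e]|.

Definition maxdeg (G : sgraph) : nat := \max_(v : vtx G) deg v.

Definition mindeg_ge1 (G : sgraph) : Prop := forall v : vtx G, 0 < deg v.

Definition Lvtx (G : sgraph) : finType := {e : {set vtx G} | e \in edges G}.

Definition Ladj (G : sgraph) : rel (Lvtx G) :=
  fun e1 e2 => (e1 != e2) && ~~ [disjoint val e1 & val e2].

Lemma Ladj_sym G : symmetric (@Ladj G).
Proof. by move=> e1 e2; rewrite /Ladj eq_sym disjoint_sym. Qed.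

Lemma Ladj_irr G : irreflexive (@Ladj G).
Proof. by move=> e; rewrite /Ladj eqxx. Qed.

Definition line_graph (G : sgraph) : sgraph := SGraph (@Ladj_sym G) (@Ladj_irr G).

(* is_f N D m : m = f(N, D) = max { e(L(G)) : e(G) = N, Delta(G) = D, delta(G) >= 1 } *)
Definition admissible (N D : nat) (G : sgraph) : Prop :=
  [/\ nedges G = N, maxdeg G = D & mindeg_ge1 G].

Definition is_f (N D m : nat) : Prop :=
  (exists G, admissible N D G /\ nedges (line_graph G) = m) /\
  (forall G, admissible N D G -> nedges (line_graph G) <= m).

Definition feasible (N M : nat) : Prop :=
  exists G : sgraph, #|vtx (line_graph G)| = N /\ nedges (line_graph G) = M.

(* Two distinct edges meet in at most one vertex, so e(L(G)) = sum_v C(deg v, 2).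
   Upper bound: let v0 have degree Delta and let T be the R = N - Delta edges avoiding v0.
   Every other vertex lies on at most one edge through v0, so its term is at most
   C(deg_T v, 2) + deg_T v; summing and using e(L(T)) <= C(R, 2) gives
   f(N, Delta) <= C(Delta, 2) + C(R, 2) + 2R < C(Delta, 2) + C(R + 2, 2).
   Construction: write M - C(Delta, 2) = C(s + 1, 2) + j with j <= s <= R, so j < Delta
   because R < Delta. A star with centre c and Delta leaves L, a star centred at a leaf
   w in L whose s leaves avoid c and w and meet L in j vertices, and R - s isolated edges
   form a graph with N edges whose line graph has C(Delta, 2) + C(s + 1, 2) + j = M edges. *)

From mathcomp Require Import all_boot zify.
Set Implicit Arguments. Unset Strict Implicit. Unset Printing Implicit Defensive.

Lemma bin2S n : 'C(n.+1, 2) = 'C(n, 2) + n.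
Proof. by rewrite binS bin1. Qed.

Lemma bin2_double n : 2 * 'C(n, 2) = n * n.-1.
Proof. by rewrite -mul_bin_diag bin1. Qed.

Definition distinct_pairs (T : finType) (A : {set T}) :=
  [set p : T * T | [&& p.1 \in A, p.2 \in A & p.1 != p.2]].

Lemma card_distinct_pairs (T : finType) (A : {set T}) :
  #|distinct_pairs A| = #|A| * #|A|.-1.
Proof.
have -> : distinct_pairs A = setX A A :\: [set (a, a) | a in A].
  apply/setP => -[a b]; rewrite !inE /=; apply/and3P/andP => [[ha hb hab]|[]].
    split; last by rewrite ha hb.
    by apply/imsetP => -[c _ [eac ebc]]; move: hab; rewrite eac ebc eqxx.
  move=> hdiag /andP [ha hb]; split=> //; apply: contraNneq hdiag => <-.
  exact: imset_f.
rewrite cardsD (setIidPr _); last first.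
  by apply/subsetP => _ /imsetP [a ha ->]; rewrite inE /= ha.
by rewrite cardsX card_imset; [rewrite -subn1 mulnBr muln1 | move=> a b []].
Qed.

Lemma sum_mem_card (T : finType) (A : {set T}) : \sum_x (x \in A) = #|A|.
Proof. by rewrite -sum1_card [RHS]big_mkcond; apply: eq_bigr => x _; case: (x \in A). Qed.

Section Families.
Variable V : finType.
Implicit Types (F : {set {set V}}) (e L X : {set V}) (c v w x y : V).

Definition uniform2 F := forall e, e \in F -> #|e| = 2.

Definition fdeg F v := #|[set e in F | v \in e]|.

Definition cherries F := \sum_v 'C(fdeg F v, 2).

Definition meeting_pairs F := [set p : {set V} * {set V} |
  [&& p.1 \in F, p.2 \in F, p.1 != p.2 & ~~ [disjoint p.1 & p.2]]].

Lemma fdegE F v : fdeg F v = \sum_(e in F) (v \in e).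
Proof.
rewrite /fdeg -sum_mem_card [RHS]big_mkcond; apply: eq_bigr => e _.
by rewrite inE; case: (e \in F).
Qed.

Lemma sum_fdeg F : uniform2 F -> \sum_v fdeg F v = 2 * #|F|.
Proof.
move=> F2; rewrite (eq_bigr _ (fun v _ => fdegE F v)) exchange_big /=.
rewrite -sum1_card big_distrr /=; apply: eq_bigr => e /F2 <-.
by rewrite muln1 sum_mem_card.
Qed.

Lemma card_setI_le1 F e1 e2 : uniform2 F -> e1 \in F -> e2 \in F -> e1 != e2 ->
  #|e1 :&: e2| <= 1.
Proof.
move=> F2 F_e1 F_e2; apply: contraNT; rewrite -ltnNge => I_gt1.
have eqI e : e \in F -> e1 :&: e2 \subset e -> e1 :&: e2 = e.
  by move=> F_e subI; apply/eqP; rewrite eqEcard subI (F2 e F_e).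
by rewrite -(eqI e1) ?subsetIl // {1}(eqI e2) ?subsetIr.
Qed.

Lemma card_meeting_pairs F : uniform2 F ->
  #|meeting_pairs F| = \sum_v fdeg F v * (fdeg F v).-1.
Proof.
move=> F2; under [RHS]eq_bigr => v _ do rewrite -card_distinct_pairs -sum_mem_card.
rewrite exchange_big -sum_mem_card; apply: eq_bigr => -[e1 e2] _ /=.
set b := [&& e1 \in F, e2 \in F & e1 != e2].
have pair_at v :
    ((e1, e2) \in distinct_pairs [set e in F | v \in e]) = b && (v \in e1 :&: e2).
  by rewrite !inE /b; case: (v \in e1); case: (v \in e2); rewrite ?andbF ?andbT.
under eq_bigr => v _ do rewrite pair_at.
rewrite inE /= -setI_eq0 -cards_eq0 !andbA -[_ && (e1 != e2)]andbA -/b.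
have [/and3P [F_e1 F_e2 e12] | _] /= := boolP b; last by rewrite big1.
rewrite sum_mem_card.
by have := card_setI_le1 F2 F_e1 F_e2 e12; case: #|_| => [|[]].
Qed.

Lemma double_cherries F : uniform2 F -> 2 * cherries F = #|meeting_pairs F|.
Proof.
move=> F2; rewrite card_meeting_pairs // /cherries big_distrr.
by apply: eq_bigr => v _; apply: bin2_double.
Qed.

Lemma uniform2U F1 F2 : uniform2 F1 -> uniform2 F2 -> uniform2 (F1 :|: F2).
Proof. by move=> F1_2 F2_2 e; rewrite inE => /orP [/F1_2 | /F2_2]. Qed.

Lemma fdegU F1 F2 v : [disjoint F1 & F2] -> fdeg (F1 :|: F2) v = fdeg F1 v + fdeg F2 v.
Proof. by move=> F12; rewrite !fdegE -bigU //; apply: eq_bigl => e; rewrite inE. Qed.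

Lemma fdegU1 F e v : e \notin F -> fdeg (e |: F) v = (v \in e) + fdeg F v.
Proof. by move=> Fe; rewrite !fdegE big_setU1. Qed.

Lemma fdeg0_notin F e x : fdeg F x = 0 -> x \in e -> e \notin F.
Proof.
move/eqP; rewrite cards_eq0 => /eqP /setP /(_ e) + x_e.
by rewrite !inE x_e andbT => ->.
Qed.

Lemma cherries_add_edge F x y : fdeg F x = 0 -> fdeg F y = 0 ->
  cherries ([set x; y] |: F) = cherries F.
Proof.
move=> Fx Fy; have Fxy := fdeg0_notin Fx (set21 x y).
apply: eq_bigr => v _; rewrite fdegU1 // !inE.
have [->|_] := eqVneq v x; first by rewrite Fx.
by have [->|_] := eqVneq v y; first by rewrite orbT Fy.
Qed.

Definition star c X : {set {set V}} := [set [set c; x] | x in X].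

Section Stars.
Variables (c : V) (X : {set V}).
Hypothesis cX : c \notin X.

Let star_inj : {in X &, injective (fun x => [set c; x])}.
Proof.
move=> x1 x2 X_x1 _ e12; have : x1 \in [set c; x2] by rewrite -e12 set22.
by rewrite !inE => /orP [/eqP x1c | /eqP //]; move: cX; rewrite -x1c X_x1.
Qed.

Lemma uniform2_star : uniform2 (star c X).
Proof.
by move=> _ /imsetP [x X_x ->]; rewrite cards2; case: eqP cX => // ->; rewrite X_x.
Qed.

Lemma card_star : #|star c X| = #|X|.
Proof. exact: card_in_imset. Qed.

Lemma fdeg_star v : fdeg (star c X) v = if v == c then #|X| else v \in X.
Proof.
rewrite fdegE big_imset //=; case: eqVneq => [->|vc].
  by rewrite -sum1_card; apply: eq_bigr => x _; rewrite set21.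
under eq_bigr => x _ do rewrite !inE (negbTE vc) /=.
have [X_v | nX_v] := boolP (v \in X); last first.
  by rewrite big1 // => x X_x; case: eqP X_x nX_v => // -> ->.
by rewrite (bigD1 v) //= eqxx big1 // => x /andP [_ /negbTE]; rewrite eq_sym => ->.
Qed.

End Stars.

Lemma disjoint_stars c w L X : c \notin X -> c != w -> [disjoint star c L & star w X].
Proof.
move=> cX cw; rewrite -setI_eq0; apply/eqP/setP => e; rewrite !inE.
apply/andP => -[/imsetP [x _ ->] /imsetP [y X_y exy]].
have : c \in [set w; y] by rewrite -exy set21.
by rewrite !inE (negbTE cw) => /eqP cy; rewrite cy X_y in cX.
Qed.

Lemma cherries_two_stars c w L X :
  c \notin L -> c \notin X -> w \in L -> w \notin X ->
  cherries (star c L :|: star w X) = 'C(#|L|, 2) + 'C(#|X|.+1, 2) + #|L :&: X|.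
Proof.
move=> cL cX wL wX; have cw : c != w by apply: contraNneq cL => ->.
have deg_v v : 'C(fdeg (star c L :|: star w X) v, 2) =
    (if v == c then 'C(#|L|, 2) else 0) + (if v == w then 'C(#|X|.+1, 2) else 0)
    + (v \in L :&: X).
  rewrite fdegU ?disjoint_stars // !fdeg_star // inE.
  have [->|vc] := eqVneq v c; first by rewrite (negbTE cw) (negbTE cX) (negbTE cL) !addn0.
  have [->|vw] := eqVneq v w; first by rewrite wL (negbTE wX) andbF add1n addn0.
  by case: (v \in L); case: (v \in X).
rewrite /cherries (eq_bigr _ (fun v _ => deg_v v)) !big_split /=.
by rewrite -!big_mkcond !big_pred1_eq sum1_card.
Qed.

End Families.

Section Graphs.
Variable G : sgraph.
Implicit Types u v : vtx G.

Lemma uniform2_edges : uniform2 (edges G).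
Proof.
move=> e; rewrite inE => /existsP [x /existsP [y /andP [xy /eqP ->]]].
by rewrite cards2; case: eqVneq xy => // ->; rewrite adj_irr.
Qed.

Lemma deg_card_nbrs v : deg v = #|[set u | adj v u]|.
Proof.
rewrite /deg.
have -> : [set e in edges G | v \in e] = [set [set v; u] | u in [set u | adj v u]].
  apply/setP => e; rewrite !inE; apply/andP/imsetP => [[] | [u]].
    move=> /existsP [x /existsP [y /andP [xy /eqP ->]]].
    rewrite !inE => /orP [] /eqP ->; first by exists y; rewrite ?inE.
    by exists x; rewrite ?inE 1?adj_sym // setUC.
  rewrite inE => vu ->; split; last by rewrite set21.
  by apply/existsP; exists v; apply/existsP; exists u; rewrite vu eqxx.
apply: card_in_imset => u1 u2; rewrite !inE => vu1 _ e12.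
have : u1 \in [set v; u2] by rewrite -e12 set22.
by rewrite !inE => /orP [/eqP u1v | /eqP //]; rewrite u1v adj_irr in vu1.
Qed.

Lemma card_adj_pairs : #|[set p : vtx G * vtx G | adj p.1 p.2]| = 2 * nedges G.
Proof.
rewrite -sum_mem_card (eq_bigr (fun p => nat_of_bool (adj p.1 p.2))) => [|p _]; last first.
  by rewrite inE.
rewrite -(pair_bigA _ (fun u v => nat_of_bool (adj u v))) /nedges.
rewrite -(sum_fdeg uniform2_edges); apply: eq_bigr => v _.
by rewrite [fdeg _ _]deg_card_nbrs -sum_mem_card; apply: eq_bigr => u _; rewrite inE.
Qed.

Lemma card_line_adj_pairs :
  #|[set p : Lvtx G * Lvtx G | Ladj p.1 p.2]| = #|meeting_pairs (edges G)|.
Proof.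
pose f (p : Lvtx G * Lvtx G) := (val p.1, val p.2).
have f_inj : injective f by move=> [a b] [c d] [/val_inj -> /val_inj ->].
rewrite -(card_imset _ f_inj); apply: eq_card => q; apply/imsetP/idP.
  case=> p; rewrite inE /Ladj => /andP [p12 p_meet] ->.
  by rewrite inE /= !(valP p.1) !(valP p.2) val_eqE p12.
rewrite inE => /and4P [q1 q2 q12 q_meet].
exists (Sub q.1 q1, Sub q.2 q2); last by case: q {q12 q_meet} q1 q2.
by rewrite inE /Ladj /= -val_eqE !SubK q12.
Qed.

Lemma card_line_graph : #|vtx (line_graph G)| = nedges G.
Proof. exact: card_sig. Qed.

Lemma nedges_le_bin2 : nedges G <= 'C(#|vtx G|, 2).
Proof.
rewrite -card_draws; apply/subset_leq_card/subsetP => e /uniform2_edges e2.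
by rewrite inE e2.
Qed.

End Graphs.

Lemma nedges_line_graph G : nedges (line_graph G) = cherries (edges G).
Proof.
apply/eqP; rewrite -(eqn_pmul2l (_ : 0 < 2)) // (double_cherries (@uniform2_edges G)).
by rewrite -card_line_adj_pairs -card_adj_pairs.
Qed.

Section GraphOfFamily.
Variables (V : finType) (F : {set {set V}}).

Definition family_adj : rel V := fun x y => (x != y) && ([set x; y] \in F).

Lemma family_adj_sym : symmetric family_adj.
Proof. by move=> x y; rewrite /family_adj eq_sym setUC. Qed.

Lemma family_adj_irr : irreflexive family_adj.
Proof. by move=> x; rewrite /family_adj eqxx. Qed.

Definition graph_of := SGraph family_adj_sym family_adj_irr.

Hypothesis F2 : uniform2 F.

Lemma edges_graph_of : edges graph_of = F.
Proof.
apply/setP => e; rewrite inE; apply/existsP/idP => [[x /existsP [y]] | F_e].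
  by case/andP => /andP [_ F_xy] /eqP ->.
have /cards2P [x [y [xy exy]]] : #|e| == 2 by rewrite F2.
by exists x; apply/existsP; exists y; rewrite /= /family_adj xy -exy F_e eqxx.
Qed.

Lemma cherries_le_bin2 : cherries F <= 'C(#|F|, 2).
Proof.
have := nedges_le_bin2 (line_graph graph_of).
by rewrite card_line_graph nedges_line_graph /nedges edges_graph_of.
Qed.

Lemma feasible_family : feasible #|F| (cherries F).
Proof.
exists graph_of.
by rewrite card_line_graph nedges_line_graph /nedges edges_graph_of.
Qed.

End GraphOfFamily.

Section OffVertex.
Variables (V : finType) (F : {set {set V}}) (v0 : V).
Hypothesis F2 : uniform2 F.
Let T := [set e in F | v0 \notin e].

Let T2 : uniform2 T.
Proof. by move=> e; rewrite inE => /andP [/F2]. Qed.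

Lemma fdeg_le_off_vertex u : u != v0 -> fdeg F u <= (fdeg T u).+1.
Proof.
move=> u_v0; rewrite -add1n.
apply: leq_trans (_ : #|[set v0; u] |: [set e in T | u \in e]| <= _); last first.
  by rewrite cardsU1 leq_add2r leq_b1.
apply/subset_leq_card/subsetP => e; rewrite !inE => /andP [F_e u_e].
rewrite F_e u_e andbT orbC; case: (boolP (v0 \in e)) => //= v0_e.
by rewrite eq_sym eqEcard subUset !sub1set v0_e u_e (F2 F_e) cards2 eq_sym u_v0.
Qed.

Lemma cherries_le_off_vertex :
  cherries F <= 'C(fdeg F v0, 2) + cherries T + 2 * #|T|.
Proof.
rewrite /cherries (bigD1 v0) //= -addnA leq_add2l -(sum_fdeg T2) -big_split /=.
rewrite [X in _ <= X](bigD1 v0) //=; apply: leq_trans (leq_addl _ _).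
apply: leq_sum => u u_v0; rewrite -bin2S.
exact/leq_bin2l/fdeg_le_off_vertex.
Qed.

Lemma cherries_le_star_split :
  cherries F <= 'C(fdeg F v0, 2) + 'C(#|F| - fdeg F v0, 2) + 2 * (#|F| - fdeg F v0).
Proof.
have cardT : #|T| = #|F| - fdeg F v0.
  rewrite /fdeg -cardsDS; last by apply/subsetP => e; rewrite inE => /andP [].
  by apply: eq_card => e; rewrite !inE; case: (e \in F); case: (v0 \in e).
rewrite -cardT; apply: leq_trans cherries_le_off_vertex _.
by rewrite leq_add2r leq_add2l cherries_le_bin2.
Qed.

End OffVertex.

Lemma nedges_line_graph_le G (v : vtx G) :
  nedges (line_graph G) <= 'C(deg v, 2) + 'C(nedges G - deg v, 2) + 2 * (nedges G - deg v).
Proof.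
by rewrite nedges_line_graph; apply: cherries_le_star_split; apply: uniform2_edges.
Qed.

Section Ordinals.
Variable n : nat.
Implicit Types (F : {set {set 'I_n.+1}}) (a b : nat).

Definition itv a b : {set 'I_n.+1} := [set v : 'I_n.+1 | a <= v < b].

Lemma card_itv a b : b <= n.+1 -> #|itv a b| = b - a.
Proof.
move=> b_n; rewrite -sum1dep_card -[b - a]muln1 -sum_nat_const_nat.
rewrite (big_nat_widen _ _ _ _ _ b_n) (@big_nat_widenl _ _ _ _ 0) // big_mkord.
by apply: eq_bigl => i; rewrite andbC.
Qed.

Definition fresh_from F a := forall v : 'I_n.+1, a <= v -> fdeg F v = 0.

Lemma add_isolated_edges F a m : uniform2 F -> fresh_from F a -> a + 2 * m <= n.+1 ->
  exists F', [/\ uniform2 F', #|F'| = #|F| + m & cherries F' = cherries F].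
Proof.
elim: m F a => [|m IH] F a F2 Fa am; first by exists F; rewrite addn0.
pose x : 'I_n.+1 := inord a; pose y : 'I_n.+1 := inord a.+1.
have xE : x = a :> nat by rewrite inordK //; lia.
have yE : y = a.+1 :> nat by rewrite inordK //; lia.
have xy : x != y by rewrite -val_eqE /= xE yE ltn_eqF.
have Fx : fdeg F x = 0 by apply: Fa; rewrite xE.
have Fy : fdeg F y = 0 by apply: Fa; rewrite yE.
have Fxy := fdeg0_notin Fx (set21 x y).
have F1_2 : uniform2 ([set x; y] |: F).
  by move=> e; rewrite !inE => /orP [/eqP -> | /F2]; rewrite // cards2 xy.
have F1a : fresh_from ([set x; y] |: F) a.+2.
  move=> v av; rewrite fdegU1 // Fa; last by lia.
  by rewrite !inE -(val_eqE v x) -(val_eqE v y) /= xE yE; lia.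
have [F' [F'_2 cardF' chF']] := IH _ _ F1_2 F1a (ltac:(lia)).
exists F'; split => //; last by rewrite chF' cherries_add_edge.
by rewrite cardF' cardsU1 Fxy; lia.
Qed.

Lemma two_stars_family D s j m :
  0 < D -> j <= s -> j < D -> D.+1 + s - j + 2 * m <= n.+1 ->
  exists F : {set {set 'I_n.+1}},
    [/\ uniform2 F, #|F| = D + s + m & cherries F = 'C(D, 2) + 'C(s.+1, 2) + j].
Proof.
move=> D_gt0 js jD room.
pose c : 'I_n.+1 := inord 0; pose w : 'I_n.+1 := inord 1.
have cE : c = 0 :> nat by rewrite inordK.
have wE : w = 1 :> nat by rewrite inordK //; lia.
pose L := itv 1 D.+1; pose X := itv (D.+1 - j) (D.+1 + s - j).
have cL : c \notin L by rewrite inE cE.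
have cX : c \notin X by rewrite inE cE; lia.
have wL : w \in L by rewrite inE wE.
have wX : w \notin X by rewrite inE wE; lia.
have cw : c != w by rewrite -val_eqE /= cE wE.
have cardL : #|L| = D by rewrite card_itv; lia.
have cardX : #|X| = s by rewrite card_itv; lia.
have cardLX : #|L :&: X| = j.
  have -> : L :&: X = itv (D.+1 - j) D.+1 by apply/setP => v; rewrite !inE; lia.
  by rewrite card_itv; lia.
pose F := star c L :|: star w X.
have F2 : uniform2 F by apply: uniform2U; apply: uniform2_star.
have fresh : fresh_from F (D.+1 + s - j).
  move=> v v_ge; rewrite fdegU ?disjoint_stars // !fdeg_star //.
  rewrite -(val_eqE v c) -(val_eqE v w) /= cE wE !inE !ifN_eq; lia.
have [F' [F'_2 cardF' chF']] := add_isolated_edges F2 fresh room.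
exists F'; split => //.
  rewrite cardF' cardsU disjoint_setI0 ?disjoint_stars // cards0 subn0.
  by rewrite !card_star // cardL cardX.
by rewrite chF' cherries_two_stars // cardL cardX cardLX.
Qed.

End Ordinals.

Lemma bin2_decomp R t : t < 'C(R.+2, 2) ->
  exists s j, [/\ j <= s, s <= R & t = 'C(s.+1, 2) + j].
Proof.
elim: R t => [|R IH] t; first by case: t => // _; exists 0, 0.
rewrite bin2S => t_lt; have [le_t | lt_t] := leqP 'C(R.+2, 2) t.
  by exists R.+1, (t - 'C(R.+2, 2)); split; lia.
by have [s [j [js sR ->]]] := IH t lt_t; exists s, j; split; lia.
Qed.

Lemma maxdeg_attained G : 0 < maxdeg G -> exists v : vtx G, deg v = maxdeg G.
Proof.
rewrite /maxdeg; case: (pickP (@predT (vtx G))) => [v _ | no_vtx]; last by rewrite big_pred0.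
have /(eq_bigmax (fun u => deg u)) [u ->] : 0 < #|vtx G| by apply/card_gt0P; exists v.
by exists u.
Qed.

Theorem mainTheorem16 (N D : nat) :
  N < 2 * D -> D <= N ->
  forall fND : nat, is_f N D fND ->
  forall M : nat, 'C(D, 2) <= M -> M <= fND -> feasible N M.
Proof.
move=> ND DN fND [[G [[eG DG _] LG]] _] M DM Mf.
have [v0 v0D] : exists v0 : vtx G, deg v0 = D.
  by rewrite -DG; apply: maxdeg_attained; rewrite DG; lia.
have := nedges_line_graph_le v0; rewrite LG v0D eG => f_le.
have [s [j [js sR Mdec]]] :
    exists s j, [/\ j <= s, s <= N - D & M - 'C(D, 2) = 'C(s.+1, 2) + j].
  by apply: bin2_decomp; move: f_le; rewrite !bin2S; lia.
have [F [F2 cardF chF]] := @two_stars_family (N + N) D s j (N - D - s)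
  ltac:(lia) js ltac:(lia) ltac:(lia).
have -> : N = #|F| by rewrite cardF; lia.
have -> : M = cherries F by rewrite chF; lia.
exact: feasible_family.
Qed.
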